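(* Let $\nu$ be a PLNN with semantics $\llbracket\nu\rrbracket\colon\mathbb{R}^n\to\mathbb{R}^m$, let $\vec p_1,\dots,\vec p_n$ be the principal components of a dataset, let $0<k<n$, and let $\rho_k\colon\mathbb{R}^n\to\mathbb{R}^k$, $\rho_k(\vec x)=(\langle\vec p_1,\vec x\rangle,\dots,\langle\vec p_k,\vec x\rangle)^\top$, and $\theta_k\colon\mathbb{R}^k\to\mathbb{R}^n$, $\theta_k(r_1,\dots,r_k)=\sum_{i=1}^k r_i\vec p_i$. Define the classifiers $\nu'_r=\operatorname{argmax}\circ\llbracket\nu\rrbracket\circ\theta_k\colon\mathbb{R}^k\to\{1,\dots,m\}$ and $\nu_r=\operatorname{argmax}\circ\llbracket\nu\rrbracket\circ\theta_k\circ\rho_k\colon\mathbb{R}^n\to\{1,\dots,m\}$. Let $\vec x\in\mathbb{R}^n$, $\epsilon>0$, and $\delta=\epsilon\max_{1\le i\le k}\|\vec p_i\|_1$ (so that $\delta\le\epsilon\sqrt n$). If $\nu'_r$ is $\delta$-robust around $\rho_k(\vec x)$, then $\nu_r$ is $\epsilon$-robust around $\vec x$.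
   Context: A PLNN with semantics $\llbracket\nu\rrbracket=\alpha_{l+1}\circ\phi\circ\alpha_l\circ\dots\circ\phi\circ\alpha_1$ is an alternating composition of affine maps $\alpha_i$ and componentwise ReLU $\phi(x)=\max(0,x)$. $\operatorname{argmax}(x_1,\dots,x_m)$ is the smallest index $j$ with $x_j\ge x_i$ for all $i$. For a zero-mean dataset $D\subset\mathbb{R}^n$, the principal components $\vec p_1,\dots,\vec p_n$ are defined iteratively: $\vec p_i$ maximizes $\sum_{\vec d\in D}\langle\vec p_i,\vec d\rangle^2$ subject to $\|\vec p_i\|_2=1$ and $\langle\vec p_i,\vec p_h\rangle=0$ for $h<i$. A classifier $c\colon\mathbb{R}^d\to\{1,\dots,m\}$ is $\eta$-robust around $\vec z$ if there is no $\vec w\in\mathbb{R}^d$ with $\|\vec w-\vec z\|_\infty\le\eta$ and $c(\vec w)\ne c(\vec z)$. *)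

From HB Require Import structures.
From mathcomp Require Import all_boot all_order all_algebra.
Set Implicit Arguments. Unset Strict Implicit. Unset Printing Implicit Defensive.
Import Order.TTheory GRing.Theory Num.Theory.
Local Open Scope ring_scope.

Section Defs.
Variable R : rcfType.

Inductive plnn : nat -> nat -> Type :=
| PLast  : forall n m, 'M[R]_(m, n) -> 'cV[R]_m -> plnn n m
| PLayer : forall n h m, 'M[R]_(h, n) -> 'cV[R]_h -> plnn h m -> plnn n m.

Definition relu d (x : 'cV[R]_d) : 'cV[R]_d := \col_i Num.max 0 (x i 0).

Fixpoint plnn_sem n m (nu : plnn n m) : 'cV[R]_n -> 'cV[R]_m :=
  match nu in plnn n m return 'cV[R]_n -> 'cV[R]_m with
  | PLast _ _ W b => fun x => W *m x + b
  | PLayer _ _ _ W b rest => fun x => plnn_sem rest (relu (W *m x + b))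
  end.

(* argmax: smallest (0-based) index j with x_j >= x_i for all i. *)
Definition argmax m (x : 'cV[R]_m) : nat :=
  find (fun j : 'I_m => [forall i : 'I_m, x i 0 <= x j 0]) (enum 'I_m).

Definition dot d (u v : 'cV[R]_d) : R := \sum_i u i 0 * v i 0.
Definition norm1 d (v : 'cV[R]_d) : R := \sum_i `|v i 0|.
Definition norm2 d (v : 'cV[R]_d) : R := Num.sqrt (\sum_i (v i 0) ^+ 2).
Definition norm_inf d (v : 'cV[R]_d) : R := \big[Num.max/0]_i `|v i 0|.

Definition zero_mean n (D : seq 'cV[R]_n) : Prop := \sum_(d <- D) d = 0.

Definition pca_obj n (D : seq 'cV[R]_n) (q : 'cV[R]_n) : R :=
  \sum_(d <- D) (dot q d) ^+ 2.

(* p 0, ..., p (n-1) are the principal components of D (0-based indexing). *)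
Definition principal_components n (D : seq 'cV[R]_n) (p : nat -> 'cV[R]_n) : Prop :=
  forall i, (i < n)%N ->
    [/\ norm2 (p i) = 1,
        (forall h, (h < i)%N -> dot (p i) (p h) = 0) &
        (forall q : 'cV[R]_n, norm2 q = 1 ->
           (forall h, (h < i)%N -> dot q (p h) = 0) ->
           pca_obj D q <= pca_obj D (p i))].

Definition rho n (p : nat -> 'cV[R]_n) k (x : 'cV[R]_n) : 'cV[R]_k :=
  \col_(j < k) dot (p j) x.
Definition theta n (p : nat -> 'cV[R]_n) k (r : 'cV[R]_k) : 'cV[R]_n :=
  \sum_(i < k) r i 0 *: p i.

Definition robust d (T : eqType) (c : 'cV[R]_d -> T) (eta : R) (z : 'cV[R]_d) : Prop :=
  ~ exists w : 'cV[R]_d, norm_inf (w - z) <= eta /\ c w != c z.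

End Defs.

From HB Require Import structures.
From mathcomp Require Import all_boot all_order all_algebra.
Import Order.TTheory GRing.Theory Num.Theory.
Local Open Scope ring_scope.

(* The projection rho_k is Lipschitz from the sup norm to the sup norm with
   constant max_i ||p_i||_1, by Hoelder's inequality |<p_i, v>| <= ||p_i||_1 ||v||_oo.
   Hence an eps-perturbation of x moves rho_k x by at most delta, and since
   nu_r = nu'_r o rho_k, robustness transfers.  Nothing about principal
   components is used: the argument works for any vectors p_i. *)

Section Robustness.
Variable R : rcfType.

Lemma norm1_ge0 {d} (v : 'cV[R]_d) : 0 <= norm1 v.
Proof. by apply: sumr_ge0 => i _; exact: normr_ge0. Qed.

Lemma norm_inf_ge0 {d} (v : 'cV[R]_d) : 0 <= norm_inf v.
Proof. exact: bigmax_ge_id. Qed.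

Lemma ler_norm_inf {d} (v : 'cV[R]_d) i : `|v i 0| <= norm_inf v.
Proof. exact: (le_bigmax _ (fun j => `|v j 0|) i). Qed.

Lemma norm_inf_le {d} (v : 'cV[R]_d) c :
  0 <= c -> (forall i, `|v i 0| <= c) -> norm_inf v <= c.
Proof. by move=> c_ge0 vc; apply: bigmax_le. Qed.

Lemma bigmax_norm1_ge0 {n} (p : nat -> 'cV[R]_n) k :
  0 <= \big[Num.max/0]_(i < k) norm1 (p i).
Proof. by apply: bigmax_ge_id; exact: norm1_ge0. Qed.

Lemma ler_dot_norm1_inf {d} (u v : 'cV[R]_d) : `|dot u v| <= norm1 u * norm_inf v.
Proof.
apply: (le_trans (ler_norm_sum _ _ _)); rewrite /norm1 mulr_suml.
apply: ler_sum => i _; rewrite normrM.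
by apply: ler_wpM2l; [exact: normr_ge0 | exact: ler_norm_inf].
Qed.

Lemma rhoB {n} (p : nat -> 'cV[R]_n) k (w z : 'cV[R]_n) :
  rho p k w - rho p k z = rho p k (w - z).
Proof.
apply/matrixP => j i; rewrite !mxE /dot -sumrB.
by apply: eq_bigr => l _; rewrite !mxE mulrBr.
Qed.

Lemma norm_inf_rho {n} (p : nat -> 'cV[R]_n) k (v : 'cV[R]_n) :
  norm_inf (rho p k v) <= (\big[Num.max/0]_(i < k) norm1 (p i)) * norm_inf v.
Proof.
apply: norm_inf_le => [|j]; first by rewrite mulr_ge0 ?bigmax_norm1_ge0 ?norm_inf_ge0.
rewrite /rho mxE; apply: (le_trans (ler_dot_norm1_inf _ _)).
apply: ler_wpM2r; first exact: norm_inf_ge0.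
exact: (le_bigmax _ (fun i : 'I_k => norm1 (p i)) j).
Qed.

Lemma robust_comp_lipschitz {d e} {T : eqType} (c : 'cV[R]_e -> T)
    (f : 'cV[R]_d -> 'cV[R]_e) (L eta : R) (z : 'cV[R]_d) :
  0 <= L -> (forall w, norm_inf (f w - f z) <= L * norm_inf (w - z)) ->
  robust c (eta * L) (f z) -> robust (c \o f) eta z.
Proof.
move=> L_ge0 f_lip c_rob [w [w_near cw_ne]]; apply: c_rob.
exists (f w); split=> //; apply: (le_trans (f_lip w)).
by rewrite [eta * L]mulrC ler_wpM2l.
Qed.

End Robustness.

Theorem mainTheorem4 (R : rcfType) (n m k : nat) (nu : plnn R n m)
  (D : seq 'cV[R]_n) (p : nat -> 'cV[R]_n)
  (hD : zero_mean D) (hp : principal_components D p)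
  (hk0 : (0 < k)%N) (hkn : (k < n)%N)
  (x : 'cV[R]_n) (eps : R) (heps : 0 < eps) :
  let nu'_r := fun r : 'cV[R]_k => argmax (plnn_sem nu (theta p r)) in
  let nu_r := fun y : 'cV[R]_n => argmax (plnn_sem nu (theta p (rho p k y))) in
  let delta := eps * \big[Num.max/0]_(i < k) norm1 (p i) in
  robust nu'_r delta (rho p k x) -> robust nu_r eps x.
Proof.
move=> nu'_r nu_r delta.
apply: robust_comp_lipschitz => [|w]; first exact: bigmax_norm1_ge0.
by rewrite rhoB; exact: norm_inf_rho.
Qed.
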